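(* Let $H_n$ be the pyrene system with $n$ pyrene fragments, and let $F(H_0,x)=1$. Then $F(H_1,x)=4x^2+2x$ and for all $n\ge 2$, $$F(H_n,x)=(4x^2+2x)F(H_{n-1},x)-x^2F(H_{n-2},x).$$
   Context: Pyrene system: draw the hexagonal lattice so that every hexagon has two vertical sides; horizontally adjacent hexagons then share a vertical edge. For $n\ge1$, $H_n$ is the hexagonal system (the plane graph formed by the vertices and edges of the following $4n$ hexagons) consisting of a horizontal linear row of $2n$ hexagons $h_{1,1},h_{1,2},\dots,h_{n,1},h_{n,2}$, consecutive ones sharing a vertical edge, together with, for each $i$, a hexagon $s_{i,1}$ directly above and a hexagon $s_{i,2}$ directly below the common edge of $h_{i,1}$ and $h_{i,2}$ (each sharing an edge with both $h_{i,1}$ and $h_{i,2}$). $H_0$ is the null graph. For a perfect matching $M$ of $G$, a forcing set is a subset $S\subseteq M$ contained in no other perfect matching of $G$, and the forcing number $f(G,M)$ is the minimum size of a forcing set. The forcing polynomial is $F(G,x)=\sum_{M\in\mathcal{M}(G)}x^{f(G,M)}$, where $\mathcal{M}(G)$ is the set of perfect matchings of $G$. *)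

From mathcomp Require Import all_boot all_order all_algebra.
Set Implicit Arguments. Unset Strict Implicit. Unset Printing Implicit Defensive.
Import GRing.Theory.

(** * Generic graph notions.
    A (finite simple) graph is given by a vertex set [V : {set T}] and an edge
    set [E : {set {set T}}] whose elements are 2-element subsets of [V]. *)
Section Matchings.
Variable T : finType.

Definition is_perfect_matching (V : {set T}) (E : {set {set T}})
    (M : {set {set T}}) : bool :=
  (M \subset E) && [forall v in V, #|[set e in M | v \in e]| == 1%N].

Definition perfect_matchings (V : {set T}) (E : {set {set T}}) :
    {set {set {set T}}} := [set M | is_perfect_matching V E M].

Definition forcing_set (V : {set T}) (E : {set {set T}})
    (M S : {set {set T}}) : bool :=
  (S \subset M) &&
  [forall M' in perfect_matchings V E, (S \subset M') ==> (M' == M)].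

(** f(G,M): minimum size of a forcing set of M (M itself is always a forcing
    set, so #|M| is a valid starting value of the minimum). *)
Definition forcing_number (V : {set T}) (E : {set {set T}})
    (M : {set {set T}}) : nat :=
  \big[minn/#|M|]_(S : {set {set T}} | forcing_set V E M S) #|S|.

Definition forcing_poly (V : {set T}) (E : {set {set T}}) : {poly int} :=
  (\sum_(M in perfect_matchings V E) 'X^(forcing_number V E M))%R.

End Matchings.

(** * The pyrene system H_n, embedded in the "brick wall" model of the
    hexagonal lattice.  Lattice points are (x,y) in N^2; horizontal lattice
    edges join (x,y)-(x+1,y); vertical lattice edges join (x,y)-(x,y+1) when
    x+y is even.  A hexagon (with two vertical sides) is the "brick" with
    lower-left corner (a,b), a+b even: vertices (a..a+2) x (b..b+1),
    vertical sides at x=a and x=a+2.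

    For H_n (n >= 1):
    - the row hexagons h_{1,1},h_{1,2},...,h_{n,1},h_{n,2} are the bricks
      (2k, 2), k < 2n (consecutive ones share a vertical edge);
    - s_{i,1} (above the common edge of h_{i,1},h_{i,2}) is the brick
      (4i-3, 3) and s_{i,2} (below it) is the brick (4i-3, 1), i = 1..n. *)

Definition pyr_vertex (n : nat) : finType := ('I_(4 * n + 1) * 'I_5)%type.

Definition pyr_brick (n a b : nat) : bool :=
  ((b == 2%N) && ~~ odd a && (a < 4 * n)%N)
  || (((b == 1%N) || (b == 3%N)) && (a %% 4 == 1%N) && (a < 4 * n)%N).

Definition hex_vertex (a b x y : nat) : bool :=
  (a <= x <= a + 2)%N && (b <= y <= b + 1)%N.

Definition hex_edge (a b x1 y1 x2 y2 : nat) : bool :=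
  ((y1 == y2) && ((y1 == b) || (y1 == b + 1)%N) &&
     (((x2 == x1 + 1)%N && (a <= x1 < a + 2)%N) ||
      ((x1 == x2 + 1)%N && (a <= x2 < a + 2)%N)))
  || ((x1 == x2) && ((x1 == a) || (x1 == a + 2)%N) &&
     (((y2 == y1 + 1)%N && (y1 == b)) || ((y1 == y2 + 1)%N && (y2 == b)))).

Definition pyr_V (n : nat) : {set pyr_vertex n} :=
  [set v : pyr_vertex n | [exists a : 'I_(4 * n + 1), exists b : 'I_5,
      pyr_brick n a b && hex_vertex a b v.1 v.2]].

Definition pyr_E (n : nat) : {set {set pyr_vertex n}} :=
  [set e : {set pyr_vertex n} | [exists u : pyr_vertex n, exists w : pyr_vertex n,
      (e == [set u; w]) &&
      [exists a : 'I_(4 * n + 1), exists b : 'I_5,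
         pyr_brick n a b && hex_edge a b u.1 u.2 w.1 w.2]]].

Definition F_pyrene (n : nat) : {poly int} :=
  if n is 0 then 1%R else forcing_poly (pyr_V n) (pyr_E n).

From mathcomp Require Import all_boot all_order all_algebra.
From mathcomp Require Import zify ring.
Set Implicit Arguments. Unset Strict Implicit. Unset Printing Implicit Defensive.

(* Cut H_n into its n pyrene fragments, consecutive ones sharing a vertical edge. Inside a
   fragment a perfect matching has one of six shapes: four free ones, in which the bottom and the
   top hexagon are each matched in one of two ways and no edge leaves the fragment, and two that
   cover the shared vertices by the two horizontal edges leaving the fragment to the left or to
   the right. Perfect matchings are therefore coded by words over six letters in which "right" is
   never followed by "left". The forcing number is additive: a free fragment needs one edge in
   each of its two switchable hexagons and a left or right one a single edge; conversely,
   switching any of these hexagons yields a perfect matching differing from the given one in a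
   region disjoint from the others, so every forcing set meets each of them. If A_n counts all
   words and B_n those starting with "left", each weighted by x^(forcing number), choosing the
   first letter gives A_(n+1) = (4x^2 + 2x) A_n - x B_n and B_(n+1) = x A_n. *)

(** * Perfect matchings and forcing sets *)

Lemma bigmin_leq (I : eqType) (r : seq I) (P : pred I) (F : I -> nat) x0 i :
  i \in r -> P i -> \big[minn/x0]_(j <- r | P j) F j <= F i.
Proof.
elim: r => [|j r IHr] //; rewrite inE big_cons => /predU1P[<- -> | ri Pi].
  exact: geq_minl.
by case: ifP => _; [apply: leq_trans (geq_minr _ _) (IHr ri Pi) | apply: IHr].
Qed.

Section PerfectMatchings.
Variables (T : finType) (V : {set T}) (E : {set {set T}}).
Hypothesis edge_pair : forall e, e \in E -> exists u w, e = [set u; w].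
Hypothesis edge_inV : forall u w, [set u; w] \in E -> u \in V.

Lemma edge_inV2 u w : [set u; w] \in E -> w \in V.
Proof. by rewrite setUC; apply: edge_inV. Qed.

Lemma set2_eq (x y z w : T) : [set x; y] = [set z; w] ->
  (x = z /\ y = w) \/ (x = w /\ y = z).
Proof.
move=> E2.
have := set21 x y; rewrite E2 => /set2P[] xE; subst x.
- have := set22 z w; rewrite -E2 => /set2P[] wE; subst w; last by left.
  by have := set22 z y; rewrite E2 => /set2P[] ->; left.
- have := set21 z w; rewrite -E2 => /set2P[] zE; subst z; last by right.
  by have := set22 w y; rewrite E2 => /set2P[] ->; right.
Qed.

Definition matching_of (f : T -> T) : {set {set T}} := [set [set u; f u] | u in V].

Section Mate.
Variable M : {set {set T}}.
Hypothesis HM : is_perfect_matching V E M.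

Definition mate (v : T) : T := odflt v [pick w | [set v; w] \in M].

Lemma perfect_matching_sub : M \subset E.
Proof. by case/andP: HM. Qed.

Lemma perfect_matching_deg v : v \in V -> #|[set e in M | v \in e]| = 1.
Proof. by case/andP: HM => _ /forall_inP deg /deg /eqP. Qed.

Lemma mem_mate v : v \in V -> [set v; mate v] \in M.
Proof.
move=> Vv; have /eqP/cards1P[e0 Me0] := perfect_matching_deg Vv.
have : e0 \in [set e in M | v \in e] by rewrite Me0 set11.
rewrite inE => /andP[M_e0 ve0].
have [u [w e0E]] := edge_pair (subsetP perfect_matching_sub _ M_e0).
rewrite /mate; case: pickP => [w' // | noM]; exfalso.
subst e0; case/set2P: ve0 => vE; subst v.
- by move: (noM w); rewrite M_e0.
- by move: (noM u); rewrite setUC M_e0.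
Qed.

Lemma mate_uniq v w : v \in V -> [set v; w] \in M -> mate v = w.
Proof.
move=> Vv Mvw; have /eqP/cards1P[e0 Me0] := perfect_matching_deg Vv.
have /set1P vwE : [set v; w] \in [set e0] by rewrite -Me0 inE Mvw set21.
have /set1P vmE : [set v; mate v] \in [set e0] by rewrite -Me0 inE mem_mate ?set21.
by case: (set2_eq (etrans vmE (esym vwE))) => [[_ ->] | [<- ->]].
Qed.

Lemma mate_in v : v \in V -> mate v \in V.
Proof. by move=> Vv; apply: (@edge_inV2 v); rewrite (subsetP perfect_matching_sub) ?mem_mate. Qed.

Lemma mateK : {in V, involutive mate}.
Proof. by move=> v Vv; apply: mate_uniq; rewrite ?mate_in // setUC mem_mate. Qed.

Lemma matching_of_mate : M = matching_of mate.
Proof.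
apply/setP => e; apply/idP/imsetP => [Me | [u Vu ->]]; last exact: mem_mate.
have [u [w eE]] := edge_pair (subsetP perfect_matching_sub _ Me).
have Vu : u \in V by apply: (@edge_inV u w); rewrite -eE (subsetP perfect_matching_sub).
by exists u; rewrite // eE (mate_uniq Vu (_ : [set u; w] \in M)) // -eE.
Qed.

End Mate.

Lemma matching_of_perfect f :
  {in V, forall v, [set v; f v] \in E} -> {in V, involutive f} ->
  is_perfect_matching V E (matching_of f).
Proof.
move=> Ef fK; apply/andP; split.
  by apply/subsetP => _ /imsetP[u Vu ->]; apply: Ef.
apply/forall_inP => v Vv; apply/cards1P; exists [set v; f v].
apply/setP => e; rewrite !inE; apply/andP/eqP => [[/imsetP[u Vu ->]] | ->].
  case/set2P=> ->; first by [].
  by rewrite fK // setUC.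
by split; [apply/imsetP; exists v | rewrite set21].
Qed.

Lemma mem_matching_of f a b : {in V, involutive f} ->
  [set a; b] \in matching_of f -> f a = b.
Proof.
move=> fK /imsetP[u Vu /set2_eq[[-> ->] | [-> ->]]] //.
by rewrite fK.
Qed.

Lemma forcing_set_self M :
  is_perfect_matching V E M -> forcing_set V E M M.
Proof.
move=> HM; rewrite /forcing_set subxx; apply/forall_inP => M'; rewrite inE => HM'.
apply/implyP => sMM'; rewrite eq_sym eqEsubset sMM' /=.
rewrite [M'](matching_of_mate HM'); apply/subsetP => _ /imsetP[u Vu ->].
by rewrite (mate_uniq HM' Vu (subsetP sMM' _ (mem_mate HM Vu))) mem_mate.
Qed.

Lemma forcing_number_le M S : forcing_set V E M S -> forcing_number V E M <= #|S|.
Proof. exact: bigmin_leq (mem_index_enum S). Qed.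

Lemma forcing_number_ge M k : is_perfect_matching V E M ->
  (forall S, forcing_set V E M S -> k <= #|S|) -> k <= forcing_number V E M.
Proof.
move=> HM ge_k; apply: (big_ind (fun x => k <= x)) => //.
- exact/ge_k/forcing_set_self.
- by move=> x y kx ky; rewrite leq_min kx ky.
Qed.

(* Each alternative perfect matching N i must miss an edge of S, and since the N i differ from M
   in pairwise disjoint places, the missed edges are distinct. *)
Lemma forcing_set_card_ge (I : finType) (P : {set I}) (N : I -> {set {set T}}) M S :
  forcing_set V E M S ->
  (forall i, i \in P -> is_perfect_matching V E (N i) /\ N i != M) ->
  (forall i j e, i \in P -> j \in P -> e \in M -> e \notin N i -> e \notin N j -> i = j) ->
  #|P| <= #|S|.
Proof.
case/andP=> sSM /forall_inP forceS altN disjN.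
pose pick_e i := odflt set0 [pick e | (e \in S) && (e \notin N i)].
have pick_eP i : i \in P -> (pick_e i \in S) && (pick_e i \notin N i).
  move=> Pi; rewrite /pick_e; case: pickP => [e -> // | none].
  have [PMi /negP[]] := altN i Pi.
  have := forceS (N i); rewrite inE PMi => /(_ isT) /implyP; apply.
  by apply/subsetP => e Se; have := none e; rewrite Se /= => /negbFE.
rewrite -(@card_in_imset _ _ pick_e); last first.
  move=> i j Pi Pj eij; have /andP[Se Ni] := pick_eP i Pi; have /andP[_ Nj] := pick_eP j Pj.
  by apply: (disjN i j (pick_e i)) => //; [exact: subsetP sSM _ Se | rewrite eij].
by apply/subset_leq_card/subsetP => _ /imsetP[i Pi ->]; case/andP: (pick_eP i Pi).
Qed.

End PerfectMatchings.

(** * Coordinates on H_n *)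

Ltac case_bool_hyps := repeat match goal with
 | H : is_true (_ || _) |- _ => case/orP: H => H
 | H : is_true (_ && _) |- _ => let H1 := fresh H in case/andP: H => H H1
 | H : is_true (_ == _) |- _ => move/eqP: H => H
 | H : is_true true |- _ => clear H
 | H : is_true false |- _ => discriminate H
 end.

Section Coordinates.
Variable n : nat.

(* Fragment i (0 <= i < n) occupies the columns 4i..4i+4 of rows
   1..4: row pair 2-3 carries the chain of 2n hexagons, and the hexagons s_{i+1,2} and s_{i+1,1}
   sit at columns 4i+1..4i+3 of rows 1-2 and 3-4. Consecutive fragments share the vertical edge
   joining the "cut" vertices (4i, 2) and (4i, 3). *)
Definition hor_edge (x y : nat) : bool :=
  ((y == 2) || (y == 3)) && (x < 4 * n)
  || ((y == 1) || (y == 4)) && ((x %% 4 == 1) || (x %% 4 == 2)) && (x < 4 * n).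

Definition ver_edge (x y : nat) : bool :=
  (y == 2) && ~~ odd x && (x <= 4 * n) && (0 < n)
  || ((y == 1) || (y == 3)) && ((x %% 4 == 1) || (x %% 4 == 3)) && (x < 4 * n).

Definition pyr_step (p q : nat * nat) : bool :=
  (q.2 == p.2) && (q.1 == p.1 + 1) && hor_edge p.1 p.2
  || (q.1 == p.1) && (q.2 == p.2 + 1) && ver_edge p.1 p.2.

Definition pyr_adj (p q : nat * nat) : bool := pyr_step p q || pyr_step q p.

Definition pyr_vert (p : nat * nat) : bool :=
  (0 < n) && (((p.2 == 2) || (p.2 == 3)) && (p.1 <= 4 * n)
  || ((p.2 == 1) || (p.2 == 4)) && (p.1 %% 4 != 0) && (p.1 < 4 * n)).

Definition coords (u : pyr_vertex n) : nat * nat := (nat_of_ord u.1, nat_of_ord u.2).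

Fact pyr_width_gt0 : 0 < 4 * n + 1. Proof. by rewrite addn1. Qed.

(* Out-of-range coordinates are sent to arbitrary vertices; only points with [pyr_vert] are used. *)
Definition vertex_at (p : nat * nat) : pyr_vertex n :=
  (insubd (Ordinal pyr_width_gt0) p.1, insubd (ord0 : 'I_5) p.2).

Lemma coordsK : cancel coords vertex_at.
Proof. by case=> a b; rewrite /vertex_at /coords /= !valKd. Qed.

Lemma pyr_vert_bounded p : pyr_vert p -> p.1 <= 4 * n /\ p.2 <= 4.
Proof. case: p => a b; rewrite /pyr_vert /= => H; case_bool_hyps; subst; lia. Qed.

Lemma vertex_atK p : pyr_vert p -> coords (vertex_at p) = p.
Proof.
case: p => a b /pyr_vert_bounded /= [Ha Hb]; rewrite /coords /vertex_at /= !val_insubd.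
by rewrite ifT ?ifT //; lia.
Qed.

Lemma pyr_adj_sym p q : pyr_adj p q = pyr_adj q p.
Proof. by rewrite /pyr_adj orbC. Qed.

Lemma pyr_adj_vert p q : pyr_adj p q -> pyr_vert p && pyr_vert q.
Proof.
case: p q => [a b] [c d]; rewrite /pyr_adj /pyr_step /hor_edge /ver_edge /pyr_vert /= => H.
by case_bool_hyps; subst; lia.
Qed.

Lemma brick_edge_adj a b x1 y1 x2 y2 :
  pyr_brick n a b -> hex_edge a b x1 y1 x2 y2 -> pyr_adj (x1, y1) (x2, y2).
Proof.
rewrite /pyr_brick /hex_edge /pyr_adj /pyr_step /hor_edge /ver_edge /= => H1 H2.
by case_bool_hyps; subst; lia.
Qed.

Lemma brick_vertex_vert a b x y :
  pyr_brick n a b -> hex_vertex a b x y -> pyr_vert (x, y).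
Proof. by rewrite /pyr_brick /hex_vertex /pyr_vert /= => H1 H2; case_bool_hyps; subst; lia. Qed.

Lemma pyr_V_brick (u : pyr_vertex n) a b : a < 4 * n + 1 -> b < 5 -> pyr_brick n a b ->
  hex_vertex a b (coords u).1 (coords u).2 -> u \in pyr_V n.
Proof.
move=> Ha Hb H1 H2; rewrite inE; apply/existsP; exists (Ordinal Ha).
by apply/existsP; exists (Ordinal Hb); rewrite /= H1.
Qed.

Lemma mem_pyr_V u : (u \in pyr_V n) = pyr_vert (coords u).
Proof.
apply/idP/idP.
  by rewrite inE => /existsP[a /existsP[b /andP[Hb Hv]]]; apply: brick_vertex_vert Hb Hv.
have := ltn_ord u.2; case: u => [x y]; rewrite /coords /pyr_vert /= => Hy H.
case_bool_hyps; case: (ltnP x (4 * n)) => ?;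
first [ apply: (@pyr_V_brick _ (x - x %% 2) 2); rewrite /pyr_brick /hex_vertex /coords /=; lia
      | apply: (@pyr_V_brick _ (4 * n - 2) 2); rewrite /pyr_brick /hex_vertex /coords /=; lia
      | apply: (@pyr_V_brick _ (4 * (x %/ 4) + 1) 1); rewrite /pyr_brick /hex_vertex /coords /=; lia
      | apply: (@pyr_V_brick _ (4 * (x %/ 4) + 1) 3); rewrite /pyr_brick /hex_vertex /coords /=; lia ].
Qed.

Lemma pyr_E_brick (u w : pyr_vertex n) a b : a < 4 * n + 1 -> b < 5 -> pyr_brick n a b ->
  hex_edge a b (coords u).1 (coords u).2 (coords w).1 (coords w).2 -> [set u; w] \in pyr_E n.
Proof.
move=> Ha Hb H1 H2; rewrite inE; apply/existsP; exists u; apply/existsP; exists w.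
rewrite eqxx /=; apply/existsP; exists (Ordinal Ha).
by apply/existsP; exists (Ordinal Hb); rewrite /= H1.
Qed.

Lemma pyr_step_E u w : pyr_step (coords u) (coords w) -> [set u; w] \in pyr_E n.
Proof.
case: u w => [x1 y1] [x2 y2]; rewrite /coords /pyr_step /hor_edge /ver_edge /= => H; case_bool_hyps;
first [ apply: (@pyr_E_brick _ _ (x1 - x1 %% 2) 2); rewrite /pyr_brick /hex_edge /coords /=; lia
      | apply: (@pyr_E_brick _ _ (4 * (x1 %/ 4) + 1) 1); rewrite /pyr_brick /hex_edge /coords /=; lia
      | apply: (@pyr_E_brick _ _ (4 * (x1 %/ 4) + 1) 3); rewrite /pyr_brick /hex_edge /coords /=; lia
      | apply: (@pyr_E_brick _ _ x1 2); rewrite /pyr_brick /hex_edge /coords /=; lia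
      | apply: (@pyr_E_brick _ _ (x1 - 2) 2); rewrite /pyr_brick /hex_edge /coords /=; lia ].
Qed.

Lemma pyr_E_pair e : e \in pyr_E n -> exists u w, e = [set u; w].
Proof. by rewrite inE => /existsP[u /existsP[w /andP[/eqP-> _]]]; exists u, w. Qed.

Lemma mem_pyr_E u w : ([set u; w] \in pyr_E n) = pyr_adj (coords u) (coords w).
Proof.
apply/idP/idP => [|/orP[] /pyr_step_E //]; last by rewrite setUC.
rewrite inE => /existsP[u' /existsP[w' /andP[/eqP uwE /existsP[a /existsP[b /andP[Hb Hh]]]]]].
have adj_uw' : pyr_adj (coords u') (coords w') by apply: brick_edge_adj Hb Hh.
by case: (set2_eq uwE) => [[-> ->] | [-> ->]]; rewrite // pyr_adj_sym.
Qed.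

Lemma pyr_E_V u w : [set u; w] \in pyr_E n -> u \in pyr_V n.
Proof. by rewrite mem_pyr_E mem_pyr_V => /pyr_adj_vert/andP[]. Qed.

End Coordinates.

Section CoordinateMatchings.
Variable n : nat.

Definition mate_map (f : nat * nat -> nat * nat) : Prop :=
  forall p, pyr_vert n p -> pyr_adj n p (f p) /\ f (f p) = p.

Definition coord_matching (f : nat * nat -> nat * nat) : {set {set pyr_vertex n}} :=
  matching_of (pyr_V n) (fun u => vertex_at n (f (coords u))).

Section MateMap.
Variable f : nat * nat -> nat * nat.
Hypothesis f_mate : mate_map f.

Lemma mate_map_vert p : pyr_vert n p -> pyr_vert n (f p).
Proof. by move=> /f_mate[/pyr_adj_vert/andP[]]. Qed.

Lemma lift_mate_mapK : {in pyr_V n, involutive (fun u => vertex_at n (f (coords u)))}.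
Proof.
move=> u; rewrite mem_pyr_V => /[dup] /f_mate[_ fK] Vu.
by rewrite /= vertex_atK ?mate_map_vert // fK coordsK.
Qed.

Lemma coord_matching_perfect : is_perfect_matching (pyr_V n) (pyr_E n) (coord_matching f).
Proof.
apply: matching_of_perfect lift_mate_mapK => u; rewrite mem_pyr_V => /[dup] /f_mate[adj_f _] Vu.
by rewrite mem_pyr_E vertex_atK ?mate_map_vert.
Qed.

Lemma coord_matching_mem p : pyr_vert n p -> [set vertex_at n p; vertex_at n (f p)] \in coord_matching f.
Proof. by move=> Vp; apply/imsetP; exists (vertex_at n p); rewrite ?mem_pyr_V vertex_atK. Qed.

Lemma mem_coord_matching p q : pyr_vert n p -> pyr_vert n q ->
  [set vertex_at n p; vertex_at n q] \in coord_matching f -> f p = q.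
Proof.
move=> Vp Vq /(mem_matching_of lift_mate_mapK); rewrite /= vertex_atK // => fpq.
by rewrite -(vertex_atK (mate_map_vert Vp)) -(vertex_atK Vq) fpq.
Qed.

End MateMap.

Section CoordinateMate.
Variable M : {set {set pyr_vertex n}}.
Hypothesis HM : is_perfect_matching (pyr_V n) (pyr_E n) M.

Definition cmate (p : nat * nat) : nat * nat := coords (mate M (vertex_at n p)).

Lemma cmate_map : mate_map cmate.
Proof.
move=> p Vp; have Vu : vertex_at n p \in pyr_V n by rewrite mem_pyr_V vertex_atK.
split; last by rewrite /cmate coordsK (mateK (@pyr_E_pair n) (@pyr_E_V n) HM Vu) vertex_atK.
rewrite -{1}(vertex_atK Vp) -mem_pyr_E.
exact: subsetP (perfect_matching_sub HM) _ (mem_mate (@pyr_E_pair n) HM Vu).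
Qed.

Lemma perfect_matching_coordE f : (forall p, pyr_vert n p -> cmate p = f p) -> M = coord_matching f.
Proof.
move=> cmateE; rewrite [LHS](matching_of_mate (@pyr_E_pair n) (@pyr_E_V n) HM).
apply: eq_in_imset => u; rewrite mem_pyr_V => Vu.
by rewrite -cmateE // /cmate !coordsK.
Qed.

End CoordinateMate.
End CoordinateMatchings.

(** * The six configurations of a fragment *)

Definition frag_pts : seq (nat * nat) := [seq (r, y) | r <- iota 1 3, y <- iota 1 4].

Lemma mem_frag_pts r y : ((r, y) \in frag_pts) = (1 <= r <= 3) && (1 <= y <= 4).
Proof. rewrite /frag_pts /= !inE !xpair_eqE; apply/idP/idP => H; case_bool_hyps; lia. Qed.

Definition shift (j : nat) (q : nat * nat) : nat * nat := (4 * j + q.1, q.2).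
Definition unshift (j : nat) (q : nat * nat) : nat * nat := (q.1 - 4 * j, q.2).

Lemma shiftK j : cancel (shift j) (unshift j).
Proof. by case=> a b; rewrite /shift /unshift /= addKn. Qed.

Lemma pyr_adj_shift n j p w : j < n -> p \in frag_pts ->
  pyr_adj n (shift j p) w = (4 * j <= w.1) && pyr_adj 1 p (unshift j w).
Proof.
case: p w => [r y] [a b]; rewrite mem_frag_pts => Hj Hp.
rewrite /pyr_adj /pyr_step /hor_edge /ver_edge /shift /unshift /=.
by apply/idP/idP => H; case_bool_hyps; subst; lia.
Qed.

Definition pair_mate (es : seq ((nat * nat) * (nat * nat))) (v : nat * nat) : nat * nat :=
  foldr (fun e w => if e.1 == v then e.2 else if e.2 == v then e.1 else w) v es.

Definition bottom_edges (flip : bool) : seq ((nat * nat) * (nat * nat)) :=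
  if flip then [:: ((2, 1), (3, 1)); ((1, 1), (1, 2)); ((2, 2), (3, 2))]
  else [:: ((1, 1), (2, 1)); ((3, 1), (3, 2)); ((1, 2), (2, 2))].

Definition top_edges (flip : bool) : seq ((nat * nat) * (nat * nat)) :=
  if flip then [:: ((2, 4), (3, 4)); ((1, 4), (1, 3)); ((2, 3), (3, 3))]
  else [:: ((1, 4), (2, 4)); ((3, 4), (3, 3)); ((1, 3), (2, 3))].

(* The six ways a perfect matching of H_n can look inside one pyrene fragment, in coordinates
   relative to the fragment (columns 0..4): for c < 4 the bottom and top hexagons are matched
   independently (bits 1 and 0 of c) and no edge crosses the fragment boundary, while c = 4
   (resp. c = 5) uses the two horizontal edges leaving the fragment to the left (resp. right). *)
Definition cfg_edges (c : nat) : seq ((nat * nat) * (nat * nat)) :=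
  if c == 4 then
    [:: ((0, 2), (1, 2)); ((0, 3), (1, 3)); ((2, 2), (2, 3));
        ((1, 1), (2, 1)); ((3, 1), (3, 2)); ((1, 4), (2, 4)); ((3, 4), (3, 3))]
  else if c == 5 then
    [:: ((4, 2), (3, 2)); ((4, 3), (3, 3)); ((2, 2), (2, 3));
        ((3, 1), (2, 1)); ((1, 1), (1, 2)); ((3, 4), (2, 4)); ((1, 4), (1, 3))]
  else bottom_edges (2 <= c) ++ top_edges (odd c).

Definition frag_cfg (c : nat) : nat * nat -> nat * nat := pair_mate (cfg_edges c).

Definition cfg_of (g : nat * nat -> nat * nat) : nat :=
  if g (1, 2) == (0, 2) then 4 else if g (3, 2) == (4, 2) then 5
  else 2 * (g (2, 1) == (3, 1)) + (g (2, 4) == (3, 4)).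

Definition grid_nbrs (p : nat * nat) : seq (nat * nat) :=
  [:: (p.1 + 1, p.2); (p.1 - 1, p.2); (p.1, p.2 + 1); (p.1, p.2 - 1)].

Definition frag_nbrs (p : nat * nat) : seq (nat * nat) := [seq q <- grid_nbrs p | pyr_adj 1 p q].

Lemma mem_frag_nbrs p q : pyr_adj 1 p q -> q \in frag_nbrs p.
Proof.
move=> adj_pq; rewrite mem_filter adj_pq /=; move: adj_pq; case: p q => [a b] [c d].
rewrite /pyr_adj /pyr_step /hor_edge /ver_edge /grid_nbrs !inE !xpair_eqE /= => H.
by case_bool_hyps; subst; lia.
Qed.

Definition compatible (v w : nat * nat) (al : seq ((nat * nat) * (nat * nat))) : bool :=
  all (fun uq => (uq.1 == w) == (uq.2 == v)) al.

(* The lists [map g ps] for the maps g sending each point of ps to a neighbour in H_1 in a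
   symmetric way. Sharing the recursive call through the let keeps the enumeration small under
   vm_compute. *)
Fixpoint local_maps (ps : seq (nat * nat)) : seq (seq (nat * nat)) :=
  if ps is v :: ps' then
    let cs := local_maps ps' in
    [seq w :: c | w <- frag_nbrs v, c <- [seq c <- cs | compatible v w (zip ps' c)]]
  else [:: [::]].

Lemma map_in_local_maps (g : nat * nat -> nat * nat) ps :
  (forall v, v \in ps -> pyr_adj 1 v (g v)) -> {in ps &, forall u v, (u == g v) = (g u == v)} ->
  map g ps \in local_maps ps.
Proof.
elim: ps => [|v ps IHps] adj_g g_sym /=; first by rewrite inE.
apply: (allpairs_f_dep (fun w c => w :: c)); first by rewrite mem_frag_nbrs ?adj_g ?mem_head.
rewrite mem_filter IHps; last 2 first.
- by move=> u ps_u; rewrite adj_g // inE ps_u orbT.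
- by move=> u w ps_u ps_w; rewrite g_sym // inE ?ps_u ?ps_w orbT.
rewrite andbT /compatible -[ps in zip ps _]map_id zip_map all_map; apply/allP => u ps_u /=.
by rewrite g_sym ?inE ?eqxx ?ps_u ?orbT.
Qed.

Definition lookup (c : seq (nat * nat)) (v : nat * nat) : nat * nat := nth v c (index v frag_pts).

Lemma lookup_map g v : v \in frag_pts -> lookup (map g frag_pts) v = g v.
Proof. by move=> pts_v; rewrite /lookup (nth_map v) ?index_mem // nth_index. Qed.

Lemma local_maps_cfg :
  all (fun c => ((lookup c (1, 2) == (0, 2)) == (lookup c (1, 3) == (0, 3))) ==>
                (c == map (frag_cfg (cfg_of (lookup c))) frag_pts))
      (local_maps frag_pts).
Proof. by vm_compute. Qed.

Lemma frag_classification g :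
  (forall v, v \in frag_pts -> pyr_adj 1 v (g v)) ->
  (forall v, v \in frag_pts -> g v \in frag_pts -> g (g v) = v) ->
  (g (1, 2) == (0, 2)) = (g (1, 3) == (0, 3)) ->
  {in frag_pts, g =1 frag_cfg (cfg_of g)}.
Proof.
move=> adj_g gK balanced.
have g_sym : {in frag_pts &, forall u v, (u == g v) = (g u == v)}.
  by move=> u v pts_u pts_v; apply/eqP/eqP => [uE | vE]; subst; rewrite gK.
have /allP/(_ _ (map_in_local_maps adj_g g_sym)) := local_maps_cfg.
have cfg_ofE : cfg_of (lookup (map g frag_pts)) = cfg_of g by rewrite /cfg_of !lookup_map.
rewrite cfg_ofE !lookup_map // balanced eqxx => /eqP.
by move/eq_in_map.
Qed.

Lemma forall_cfg (P : pred nat) : all P (iota 0 6) -> forall c, c < 6 -> P c.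
Proof. by move=> /allP allP c c6; apply: allP; rewrite mem_iota. Qed.

Lemma frag_cfg_adj c v : c < 6 -> v \in frag_pts -> pyr_adj 1 v (frag_cfg c v).
Proof.
by move=> /(@forall_cfg (fun c => all (fun v => pyr_adj 1 v (frag_cfg c v)) frag_pts) isT) /allP; apply.
Qed.

Lemma frag_cfgK c v : c < 6 -> v \in frag_pts -> frag_cfg c v \in frag_pts ->
  frag_cfg c (frag_cfg c v) = v.
Proof.
move=> /(@forall_cfg (fun c => all (fun v => (frag_cfg c v \in frag_pts) ==>
                                     (frag_cfg c (frag_cfg c v) == v)) frag_pts) isT) /allP.
by move=> /[apply] /implyP /[apply] /eqP.
Qed.

Lemma frag_cfg_out c v : c < 6 -> v \in frag_pts -> frag_cfg c v \notin frag_pts ->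
  ((v.2 == 2) || (v.2 == 3)) &&
  ((c == 4) && (v.1 == 1) && (frag_cfg c v == (0, v.2))
   || (c == 5) && (v.1 == 3) && (frag_cfg c v == (4, v.2))).
Proof.
move=> /(@forall_cfg (fun c => all (fun v => (frag_cfg c v \notin frag_pts) ==>
   ((v.2 == 2) || (v.2 == 3)) &&
   ((c == 4) && (v.1 == 1) && (frag_cfg c v == (0, v.2))
    || (c == 5) && (v.1 == 3) && (frag_cfg c v == (4, v.2)))) frag_pts) isT) /allP.
by move=> /[apply] /implyP.
Qed.

Lemma frag_cfg_left c y : c < 6 -> (y == 2) || (y == 3) -> (frag_cfg c (1, y) == (0, y)) = (c == 4).
Proof.
move=> /(@forall_cfg (fun c => ((frag_cfg c (1, 2) == (0, 2)) == (c == 4)) &&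
                               ((frag_cfg c (1, 3) == (0, 3)) == (c == 4))) isT).
by case/andP=> /eqP e2 /eqP e3 /orP[] /eqP->.
Qed.

Lemma frag_cfg_right c y : c < 6 -> (y == 2) || (y == 3) -> (frag_cfg c (3, y) == (4, y)) = (c == 5).
Proof.
move=> /(@forall_cfg (fun c => ((frag_cfg c (3, 2) == (4, 2)) == (c == 5)) &&
                               ((frag_cfg c (3, 3) == (4, 3)) == (c == 5))) isT).
by case/andP=> /eqP e2 /eqP e3 /orP[] /eqP->.
Qed.

Lemma cfg_of_lt6 g : cfg_of g < 6.
Proof. by rewrite /cfg_of; case: ifP => // _; case: ifP => // _; do 2 case: (_ == _). Qed.

Definition cfg_weight (c : nat) : nat := if c < 4 then 2 else 1.

Definition cfg_forcing (c : nat) : seq ((nat * nat) * (nat * nat)) :=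
  if c == 4 then [:: ((1, 2), (0, 2))] else if c == 5 then [:: ((3, 2), (4, 2))]
  else [:: if 2 <= c then ((3, 2), (2, 2)) else ((1, 2), (2, 2));
           if odd c then ((3, 3), (2, 3)) else ((1, 3), (2, 3))].

Lemma size_cfg_forcing c : c < 6 -> size (cfg_forcing c) = cfg_weight c.
Proof. by move=> /(@forall_cfg (fun c => size (cfg_forcing c) == cfg_weight c) isT) /eqP. Qed.

Lemma cfg_forcingP c e : c < 6 -> e \in cfg_forcing c -> e.1 \in frag_pts /\ frag_cfg c e.1 = e.2.
Proof.
move=> /(@forall_cfg (fun c => all (fun e => (e.1 \in frag_pts) && (frag_cfg c e.1 == e.2))
                                   (cfg_forcing c)) isT) /allP.
by move=> /[apply] /andP[-> /eqP].
Qed.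

Lemma cfg_forcing_uniq c c' : c < 6 -> c' < 6 ->
  all (fun e => frag_cfg c' e.1 == e.2) (cfg_forcing c) -> c' = c.
Proof.
move=> /(@forall_cfg (fun c => all (fun c' => all (fun e => frag_cfg c' e.1 == e.2)
                                   (cfg_forcing c) ==> (c' == c)) (iota 0 6)) isT) /allP uniq_c c'6.
by move=> /(implyP (uniq_c c' _)) /eqP-> //; rewrite mem_iota.
Qed.

(* Switching the matching around one hexagon: the bottom (top = false) or top hexagon of a free
   fragment, or for states 4 and 5 the left or right hexagon of the middle row. *)
Definition cfg_flip (c : nat) (top : bool) : nat :=
  if c == 4 then 0 else if c == 5 then 3
  else if top then (if odd c then c - 1 else c + 1) else (if 2 <= c then c - 2 else c + 2).

Lemma cfg_flipP c top : c < 6 -> cfg_flip c top != c /\ cfg_flip c top < 4.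
Proof.
move=> /(@forall_cfg (fun c => [&& cfg_flip c top != c & cfg_flip c top < 4]) _).
by case: top => /(_ isT) /andP.
Qed.

Definition flip_zone (c : nat) (top : bool) (p : nat * nat) : bool :=
  if c == 4 then (p.1 <= 2) && ((p.2 == 2) || (p.2 == 3))
  else if c == 5 then (2 <= p.1 <= 4) && ((p.2 == 2) || (p.2 == 3))
  else (1 <= p.1 <= 3) && (if top then 3 <= p.2 <= 4 else 1 <= p.2 <= 2).

Lemma flip_zoneP c top v : c < 6 -> v \in frag_pts ->
  frag_cfg c v != frag_cfg (cfg_flip c top) v -> flip_zone c top v.
Proof.
move=> /(@forall_cfg (fun c => all (fun v =>
   (frag_cfg c v != frag_cfg (cfg_flip c top) v) ==> flip_zone c top v) frag_pts) _).
by case: top => /(_ isT) /allP /[apply] /implyP.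
Qed.

Lemma flip_zone_left c top y : c < 6 -> flip_zone c top (0, y) -> c = 4.
Proof. by rewrite /flip_zone /= => c6; case: ifP => [/eqP-> // | _]; case: ifP => [/eqP-> // | _]; lia. Qed.

Lemma flip_zone_right c top y : c < 6 -> flip_zone c top (4, y) -> c = 5.
Proof. by rewrite /flip_zone /= => c6; case: ifP => [/eqP-> // | _]; case: ifP => [/eqP-> // | _]; lia. Qed.

Lemma flip_zone_excl c v : c < 4 -> flip_zone c false v -> flip_zone c true v -> False.
Proof. by rewrite /flip_zone => c4; rewrite !ifN; lia. Qed.

Lemma pyr_vertP n p : pyr_vert n p ->
  (exists k y, [/\ k <= n, p = (4 * k, y) & (y == 2) || (y == 3)]) \/
  (exists j v, [/\ j < n, v \in frag_pts & p = shift j v]).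
Proof.
case: p => x y; rewrite /pyr_vert /= => H.
have [x4 | x4] := eqVneq (x %% 4) 0.
  by left; exists (x %/ 4), y; split; [|congr pair|]; case_bool_hyps; lia.
right; exists (x %/ 4), (x %% 4, y); split; last by rewrite /shift /=; congr pair; lia.
  by case_bool_hyps; lia.
by rewrite mem_frag_pts; case_bool_hyps; lia.
Qed.

Lemma shift_vert n j v : j < n -> v \in frag_pts -> pyr_vert n (shift j v).
Proof. by case: v => r y; rewrite mem_frag_pts /pyr_vert /= => *; lia. Qed.

(** * Codes of perfect matchings *)

Fixpoint no_clash (s : seq nat) : bool :=
  if s is c :: s' then ~~ ((c == 5) && (head 0 s' == 4)) && no_clash s' else true.

(* A code lists the configurations of the n fragments; a fragment in state 5 followed by one
   in state 4 would match the shared cut vertices twice. *)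
Definition pyr_code (n : nat) (s : seq nat) : bool :=
  [&& size s == n, all (fun c => c < 6) s & no_clash s].

Lemma no_clash_nth s j : no_clash s -> nth 0 s j = 5 -> nth 0 s j.+1 != 4.
Proof.
elim: s j => [|c s IHs] [|j] //= /andP[no54 ncs]; last exact: IHs.
by move=> c5; move: no54; rewrite c5; case: s {IHs ncs}.
Qed.

Lemma nth_no_clash s : (forall j, nth 0 s j = 5 -> nth 0 s j.+1 != 4) -> no_clash s.
Proof.
elim: s => [|c s IHs] //= no54; apply/andP; split; last by apply: IHs => j; apply: (no54 j.+1).
apply/negP => /andP[/eqP c5 /eqP s4]; have := no54 0 c5.
by case: s s4 {IHs no54} => [|d s] //= ->.
Qed.

Definition cut_mate (s : seq nat) (k y : nat) : nat * nat :=
  if nth 0 s k == 4 then (4 * k + 1, y)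
  else if (0 < k) && (nth 0 s k.-1 == 5) then (4 * k - 1, y) else (4 * k, 5 - y).

Definition code_mate (s : seq nat) (p : nat * nat) : nat * nat :=
  if p.1 %% 4 == 0 then cut_mate s (p.1 %/ 4) p.2
  else shift (p.1 %/ 4) (frag_cfg (nth 0 s (p.1 %/ 4)) (p.1 %% 4, p.2)).

Lemma code_mate_shift s j v : v \in frag_pts ->
  code_mate s (shift j v) = shift j (frag_cfg (nth 0 s j) v).
Proof.
case: v => r y; rewrite mem_frag_pts /code_mate /shift /= => H.
have -> : (4 * j + r) %/ 4 = j by lia.
have -> : (4 * j + r) %% 4 = r by lia.
by rewrite ifF //; lia.
Qed.

Lemma code_mate_cut s k y : code_mate s (4 * k, y) = cut_mate s k y.
Proof.
rewrite /code_mate /=.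
have -> : (4 * k) %/ 4 = k by lia.
by have -> : (4 * k) %% 4 = 0 by lia.
Qed.

Lemma pyr_adj_shift2 n j v w : j < n -> v \in frag_pts ->
  pyr_adj n (shift j v) (shift j w) = pyr_adj 1 v w.
Proof. by move=> jn pts_v; rewrite pyr_adj_shift // shiftK leq_addr. Qed.

Section CodeMate.
Variables (n : nat) (s : seq nat).
Hypothesis s_code : pyr_code n s.

Lemma size_code : size s = n.
Proof. by case/and3P: s_code => /eqP. Qed.

Lemma code_lt6 j : nth 0 s j < 6.
Proof.
case/and3P: s_code => _ /all_nthP s6 _; case: (ltnP j (size s)) => js; first exact: s6.
by rewrite nth_default.
Qed.

Lemma code_index_lt j : 0 < nth 0 s j -> j < n.
Proof. by rewrite -size_code; case: (ltnP j (size s)) => // js; rewrite nth_default. Qed.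

Lemma code_no_clash j : nth 0 s j = 5 -> nth 0 s j.+1 != 4.
Proof. by case/and3P: s_code => _ _; apply: no_clash_nth. Qed.

Lemma code_mate_adj p : pyr_vert n p -> pyr_adj n p (code_mate s p).
Proof.
move=> /[dup] /andP[n_gt0 _] /pyr_vertP[[k [y [kn -> y23]]] | [j [v [jn pts_v ->]]]].
  rewrite code_mate_cut /cut_mate /pyr_adj /pyr_step /=.
  case: ifP => [/eqP s4 | _].
    have : k < n by apply: code_index_lt; rewrite s4.
    by rewrite /hor_edge; case/orP: y23 => /eqP-> /=; lia.
  case: ifP => [/andP[k_gt0 _] | _]; first by rewrite /hor_edge; case/orP: y23 => /eqP-> /=; lia.
  by rewrite /ver_edge; case/orP: y23 => /eqP-> /=; lia.
by rewrite code_mate_shift // pyr_adj_shift2 // frag_cfg_adj ?code_lt6.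
Qed.

Lemma code_mateK p : pyr_vert n p -> code_mate s (code_mate s p) = p.
Proof.
move=> /pyr_vertP[[k [y [kn -> y23]]] | [j [v [jn pts_v ->]]]].
  rewrite code_mate_cut /cut_mate; case: ifP => [/eqP s4 | s4].
    have pts_1y : (1, y) \in frag_pts by rewrite mem_frag_pts; case_bool_hyps; lia.
    rewrite -[(4 * k + 1, _)]/(shift k (1, y)) code_mate_shift //.
    have /eqP-> : frag_cfg (nth 0 s k) (1, y) == (0, y) by rewrite frag_cfg_left ?s4 ?code_lt6.
    by rewrite /shift addn0.
  case: ifP => [/andP[k_gt0 /eqP s5] | s5].
    have pts_3y : (3, y) \in frag_pts by rewrite mem_frag_pts; case_bool_hyps; lia.
    have -> : (4 * k - 1, y) = shift k.-1 (3, y) by rewrite /shift /=; congr pair; lia.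
    rewrite code_mate_shift //.
    have /eqP-> : frag_cfg (nth 0 s k.-1) (3, y) == (4, y) by rewrite frag_cfg_right ?s5 ?code_lt6.
    by rewrite /shift /=; congr pair; lia.
  by rewrite code_mate_cut /cut_mate s4 s5; congr pair; case_bool_hyps; lia.
rewrite code_mate_shift //.
have [pts_d | out_d] := boolP (frag_cfg (nth 0 s j) v \in frag_pts).
  by rewrite code_mate_shift // frag_cfgK ?code_lt6.
have /andP[y23 /orP[] /andP[/andP[/eqP c4 /eqP v1] /eqP dE]] := frag_cfg_out (code_lt6 j) pts_v out_d.
  rewrite dE /shift /= addn0 code_mate_cut /cut_mate c4 eqxx.
  by case: v v1 {pts_v out_d dE y23} => r y /= ->.
rewrite dE /shift /= (_ : 4 * j + 4 = 4 * j.+1) ?code_mate_cut /cut_mate; last by lia.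
rewrite (negbTE (code_no_clash c4)) /= c4 eqxx.
by case: v v1 {pts_v out_d dE y23} => r y /= ->; congr pair; lia.
Qed.

Lemma code_mate_map : mate_map n (code_mate s).
Proof. by move=> p Vp; rewrite code_mate_adj ?code_mateK. Qed.

End CodeMate.

Definition code_matching (n : nat) (s : seq nat) : {set {set pyr_vertex n}} :=
  coord_matching n (code_mate s).

Lemma code_matching_perfect n s : pyr_code n s ->
  is_perfect_matching (pyr_V n) (pyr_E n) (code_matching n s).
Proof. by move=> /code_mate_map; apply: coord_matching_perfect. Qed.

(** * Decoding a perfect matching *)

Lemma pyr_adj_cut n k y w : (y == 2) || (y == 3) -> pyr_adj n (4 * k, y) w ->
  [\/ k < n /\ w = (4 * k + 1, y), 0 < k /\ w = (4 * k - 1, y) | w = (4 * k, 5 - y)].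
Proof.
case: w => a b y23; rewrite /pyr_adj /pyr_step /hor_edge /ver_edge /= => H.
case/orP: y23 => /eqP ?; subst; case_bool_hyps; subst;
first [ by apply: Or31; split; [lia | congr pair; lia]
      | by apply: Or32; split; [lia | congr pair; lia]
      | by apply: Or33; congr pair; lia
      | exfalso; lia ].
Qed.

Section Decode.
Variables (n : nat) (M : {set {set pyr_vertex n}}).
Hypothesis HM : is_perfect_matching (pyr_V n) (pyr_E n) M.

Lemma cmate_adj p : pyr_vert n p -> pyr_adj n p (cmate M p).
Proof. by move=> /(cmate_map HM)[]. Qed.

Lemma cmateK p : pyr_vert n p -> cmate M (cmate M p) = p.
Proof. by move=> /(cmate_map HM)[]. Qed.

Lemma cmate_sym p q : pyr_vert n p -> cmate M p = q -> cmate M q = p.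
Proof. by move=> /cmateK + <-. Qed.

Definition frag_view (j : nat) (v : nat * nat) : nat * nat := unshift j (cmate M (shift j v)).

Definition frag_state (j : nat) : nat := cfg_of (frag_view j).

Lemma cmate_shift j v : j < n -> v \in frag_pts ->
  cmate M (shift j v) = shift j (frag_view j v) /\ pyr_adj 1 v (frag_view j v).
Proof.
move=> jn pts_v; have := cmate_adj (shift_vert jn pts_v).
rewrite pyr_adj_shift // /frag_view /unshift /shift.
by case: (cmate M _) => a b /= /andP[ja adj_v]; split=> //; congr pair; lia.
Qed.

Lemma frag_view_eq j v w : j < n -> v \in frag_pts ->
  (frag_view j v == w) = (cmate M (shift j v) == shift j w).
Proof. by move=> jn pts_v; rewrite (cmate_shift jn pts_v).1 (can_eq (shiftK j)). Qed.

Definition matched_left (k y : nat) : bool := cmate M (4 * k + 1, y) == (4 * k, y).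
Definition matched_right (j y : nat) : bool := cmate M (4 * j + 3, y) == (4 * j + 4, y).
Definition left_balanced (k : nat) : bool := matched_left k 2 == matched_left k 3.
Definition right_balanced (j : nat) : bool := matched_right j 2 == matched_right j 3.

Lemma frag_viewE j : j < n -> left_balanced j ->
  {in frag_pts, frag_view j =1 frag_cfg (frag_state j)}.
Proof.
move=> jn balanced; apply: frag_classification => [v pts_v | v pts_v pts_w |].
- exact: (cmate_shift jn pts_v).2.
- apply/eqP; rewrite frag_view_eq // -(cmate_shift jn pts_v).1.
  by rewrite cmateK ?shift_vert.
- by move/eqP: balanced; rewrite !frag_view_eq ?mem_frag_pts // /shift /= addn0.
Qed.

Lemma frag_state_cut j y : j < n -> left_balanced j -> (y == 2) || (y == 3) ->
  matched_left j y = (frag_state j == 4) /\ matched_right j y = (frag_state j == 5).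
Proof.
move=> jn balanced y23.
have pts_1y : (1, y) \in frag_pts by rewrite mem_frag_pts; case/orP: y23 => /eqP->.
have pts_3y : (3, y) \in frag_pts by rewrite mem_frag_pts; case/orP: y23 => /eqP->.
rewrite -(frag_cfg_left (cfg_of_lt6 _) y23) -(frag_cfg_right (cfg_of_lt6 _) y23).
rewrite -!frag_viewE // !frag_view_eq //.
by rewrite /matched_left /matched_right /shift /= addn0.
Qed.

Lemma balanced_swap (f : nat -> bool) y : f 2 == f 3 -> (y == 2) || (y == 3) -> f y = f (5 - y).
Proof. by move=> /eqP f23 /orP[] /eqP->. Qed.

(* If (4k+1, y) is matched to the cut vertex (4k, y), then the other cut vertex (4k, 5-y)
   can be matched neither to it nor, by the right balance of fragment k-1, to (4k-1, 5-y). *)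
Lemma matched_left_other k y : k < n -> (y == 2) || (y == 3) ->
  (0 < k -> right_balanced k.-1) -> matched_left k y -> matched_left k (5 - y).
Proof.
move=> kn y23 right_bal /eqP left_y.
have y'23 : (5 - y == 2) || (5 - y == 3) by case/orP: y23 => /eqP->.
have vert x z : (z == 2) || (z == 3) -> x <= 4 * n -> pyr_vert n (x, z).
  by rewrite /pyr_vert /= => z23 xn; case_bool_hyps; lia.
have cut_y : cmate M (4 * k, y) = (4 * k + 1, y) by apply: cmate_sym left_y; apply: vert; lia.
have vert_cut' : pyr_vert n (4 * k, 5 - y) by apply: vert; lia.
apply/eqP; case: (pyr_adj_cut y'23 (cmate_adj vert_cut')) => [[_ cE] | [k_gt0 cE] | cE].
- exact: cmate_sym cE.
- have := balanced_swap (right_bal k_gt0) y23; rewrite /matched_right.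
  have -> : 4 * k.-1 + 3 = 4 * k - 1 by lia.
  have -> : 4 * k.-1 + 4 = 4 * k by lia.
  rewrite (cmate_sym vert_cut' cE) eqxx => /eqP /cmate_sym.
  have vert_right : pyr_vert n (4 * k - 1, y) by apply: vert; lia.
  by rewrite cut_y => /(_ vert_right) []; lia.
- have yE : 5 - (5 - y) = y by case/orP: y23 => /eqP->.
  by move: (cmate_sym vert_cut' cE); rewrite yE cut_y => -[]; lia.
Qed.

Lemma left_balancedT j : j < n -> left_balanced j.
Proof.
have step k : k < n -> (0 < k -> right_balanced k.-1) -> left_balanced k.
  move=> kn right_bal; apply/eqP; apply/idP/idP; exact: matched_left_other.
elim: j => [|j IHj] jn; first by apply: step.
have jn' : j < n by lia.
apply: step => // _; have [_ r2] := frag_state_cut jn' (IHj jn') (isT : (2 == 2) || (2 == 3)).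
by have [_ r3] := frag_state_cut jn' (IHj jn') (isT : (3 == 2) || (3 == 3)); rewrite /right_balanced r2 r3.
Qed.

Definition code_of : seq nat := [seq frag_state j | j <- iota 0 n].

Lemma nth_code_of j : j < n -> nth 0 code_of j = frag_state j.
Proof. by move=> jn; rewrite /code_of (nth_map 0) ?size_iota // nth_iota. Qed.

Lemma code_of_cut j y : j < n -> (y == 2) || (y == 3) ->
  matched_left j y = (nth 0 code_of j == 4) /\ matched_right j y = (nth 0 code_of j == 5).
Proof. by move=> jn y23; rewrite nth_code_of //; apply: frag_state_cut; rewrite ?left_balancedT. Qed.

Lemma code_of_code : pyr_code n code_of.
Proof.
apply/and3P; split; first by rewrite size_map size_iota.
  by apply/allP => _ /mapP[j _ ->]; apply: cfg_of_lt6.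
apply: nth_no_clash => j s5; apply/eqP => s4.
have j1n : j.+1 < n.
  by case: (ltnP j.+1 n) => // j1n; rewrite nth_default ?size_map ?size_iota in s4.
have jn : j < n by lia.
have vert x : x <= 4 * n -> pyr_vert n (x, 2) by rewrite /pyr_vert /=; lia.
have [_ right_j] := code_of_cut jn (isT : (2 == 2) || (2 == 3)).
have [left_j1 _] := code_of_cut j1n (isT : (2 == 2) || (2 == 3)).
move: right_j left_j1; rewrite s5 s4 !eqxx /matched_left /matched_right => /eqP right_j /eqP left_j1.
have e1 : cmate M (4 * j.+1, 2) = (4 * j.+1 + 1, 2) by apply: cmate_sym left_j1; apply: vert; lia.
have e2 : cmate M (4 * j.+1, 2) = (4 * j + 3, 2).
  by apply: cmate_sym; [apply: vert; lia | rewrite right_j; congr pair; lia].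
by move: e2; rewrite e1 => -[]; lia.
Qed.

Lemma cmate_code p : pyr_vert n p -> cmate M p = code_mate code_of p.
Proof.
move=> /[dup] Vp /pyr_vertP[[k [y [kn pE y23]]] | [j [v [jn pts_v ->]]]]; last first.
  rewrite code_mate_shift // nth_code_of // -frag_viewE ?left_balancedT //.
  exact: (cmate_shift jn pts_v).1.
rewrite pE code_mate_cut /cut_mate; subst p.
have n_gt0 : 0 < n by case/andP: Vp.
have vert x z : (z == 2) || (z == 3) -> x <= 4 * n -> pyr_vert n (x, z).
  by rewrite /pyr_vert /= => z23 xn; case_bool_hyps; lia.
case: ifP => [s4 | s4].
  have kn' : k < n by apply: (code_index_lt code_of_code); rewrite (eqP s4).
  have [+ _] := code_of_cut kn' y23; rewrite s4 /matched_left.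
  by move=> /eqP cE; apply: cmate_sym cE; apply: vert; lia.
case: ifP => [/andP[k_gt0 s5] | s5].
  have kn' : k.-1 < n by lia.
  have [_] := code_of_cut kn' y23; rewrite s5 /matched_right.
  have -> : 4 * k.-1 + 3 = 4 * k - 1 by lia.
  have -> : 4 * k.-1 + 4 = 4 * k by lia.
  by move=> /eqP cE; apply: cmate_sym cE; apply: vert; lia.
case: (pyr_adj_cut y23 (cmate_adj Vp)) => [[kn' cE] | [k_gt0 cE] | //].
  have [+ _] := code_of_cut kn' y23; rewrite s4 /matched_left.
  by rewrite (cmate_sym Vp cE) eqxx.
have kn' : k.-1 < n by lia.
have [_] := code_of_cut kn' y23; rewrite k_gt0 /= in s5; rewrite s5 /matched_right.
have -> : 4 * k.-1 + 3 = 4 * k - 1 by lia.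
have -> : 4 * k.-1 + 4 = 4 * k by lia.
by rewrite (cmate_sym Vp cE) eqxx.
Qed.

Lemma perfect_matching_code : exists2 s, pyr_code n s & M = code_matching n s.
Proof.
exists code_of; first exact: code_of_code.
exact: perfect_matching_coordE HM _ cmate_code.
Qed.

End Decode.

(** * The forcing number of a coded matching *)

Definition code_weight (s : seq nat) : nat := sumn (map cfg_weight s).

Lemma code_weight_cons c s : code_weight (c :: s) = cfg_weight c + code_weight s.
Proof. by []. Qed.

Section ForcingSet.
Variables (n : nat) (s : seq nat).
Hypothesis s_code : pyr_code n s.

(* A site is a hexagon whose matching can be switched: the bottom (false) and top (true)
   hexagon of a free fragment, but only one site for a fragment in state 4 or 5. *)
Definition flip_sites : {set 'I_n * bool} := [set p : 'I_n * bool | ~~ p.2 || (nth 0 s p.1 < 4)].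

Lemma card_flip_sites : #|flip_sites| = code_weight s.
Proof.
have -> : code_weight s = \sum_(j < n) cfg_weight (nth 0 s j).
  by rewrite /code_weight sumnE big_map (big_nth 0) big_mkord (size_code s_code).
rewrite -sum1_card.
have -> : \sum_(p in flip_sites) 1 = \sum_(j : 'I_n) \sum_(b : bool | ~~ b || (nth 0 s j < 4)) 1.
  by rewrite pair_big_dep /=; apply: eq_bigl => p; rewrite inE.
by apply: eq_bigr => j _; rewrite big_mkcond big_bool /= /cfg_weight; case: ifP.
Qed.

Definition frag_edge (j : nat) (e : (nat * nat) * (nat * nat)) : {set pyr_vertex n} :=
  [set vertex_at n (shift j e.1); vertex_at n (shift j e.2)].

Definition site_edge (p : 'I_n * bool) : {set pyr_vertex n} :=
  frag_edge p.1 (nth ((0, 0), (0, 0)) (cfg_forcing (nth 0 s p.1)) p.2).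

Definition forcing_edges : {set {set pyr_vertex n}} := site_edge @: flip_sites.

Lemma site_forcing (p : 'I_n * bool) : p \in flip_sites ->
  nth ((0, 0), (0, 0)) (cfg_forcing (nth 0 s p.1)) p.2 \in cfg_forcing (nth 0 s p.1).
Proof.
rewrite inE => site_p; apply: mem_nth; rewrite size_cfg_forcing ?(code_lt6 s_code) // /cfg_weight.
by case: (p.2) site_p => /= [-> // | _]; case: ifP.
Qed.

Lemma frag_edge_forcing j e : j < n -> e \in cfg_forcing (nth 0 s j) ->
  pyr_vert n (shift j e.1) /\ code_mate s (shift j e.1) = shift j e.2.
Proof.
move=> jn e_forcing; have [pts_e1 <-] := cfg_forcingP (code_lt6 s_code j) e_forcing.
by rewrite shift_vert // code_mate_shift.
Qed.

Lemma frag_edge_site j e : j < n -> e \in cfg_forcing (nth 0 s j) -> frag_edge j e \in forcing_edges.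
Proof.
move=> jn e_forcing; set c := nth 0 s j.
have e_idx : index e (cfg_forcing c) < cfg_weight c.
  by rewrite -size_cfg_forcing ?(code_lt6 s_code) // index_mem.
pose b := index e (cfg_forcing c) == 1.
have bE : nat_of_bool b = index e (cfg_forcing c).
  by move: e_idx; rewrite /b /cfg_weight; case: (index e _) => [|[|k]] //=; case: ifP.
apply/imsetP; exists (Ordinal jn, b).
  by rewrite inE /= -/c /b; move: e_idx; rewrite /cfg_weight; case: ifP => _; case: (index e _) => [|[|k]].
by rewrite /site_edge /= -/c bE nth_index.
Qed.

Lemma forcing_edges_sub : forcing_edges \subset code_matching n s.
Proof.
apply/subsetP => _ /imsetP[p site_p ->].
have [Vp mateE] := frag_edge_forcing (ltn_ord p.1) (site_forcing site_p).
rewrite /site_edge /frag_edge -mateE.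
exact: coord_matching_mem.
Qed.

Lemma forcing_edges_force s' : pyr_code n s' -> forcing_edges \subset code_matching n s' -> s' = s.
Proof.
move=> s'_code sub_s'; apply: (@eq_from_nth _ 0); first by rewrite (size_code s_code) (size_code s'_code).
move=> j; rewrite (size_code s'_code) => jn.
apply: cfg_forcing_uniq; rewrite ?(code_lt6 s_code) ?(code_lt6 s'_code) //.
apply/allP => e e_forcing; have [Ve1 mate_e1] := frag_edge_forcing jn e_forcing.
have Ve2 : pyr_vert n (shift j e.2) by rewrite -mate_e1 (mate_map_vert (code_mate_map s_code)).
have := mem_coord_matching (code_mate_map s'_code) Ve1 Ve2 (subsetP sub_s' _ (frag_edge_site jn e_forcing)).
by rewrite code_mate_shift ?(cfg_forcingP (code_lt6 s_code j) e_forcing).1 // => /(can_inj (shiftK j)) ->.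
Qed.

Lemma card_forcing_edges : #|forcing_edges| <= code_weight s.
Proof. by rewrite -card_flip_sites leq_imset_card. Qed.

End ForcingSet.

Lemma code_matching_inj n s1 s2 : pyr_code n s1 -> pyr_code n s2 ->
  code_matching n s1 = code_matching n s2 -> s1 = s2.
Proof.
move=> s1_code s2_code E; apply: (forcing_edges_force s2_code s1_code).
by rewrite E forcing_edges_sub.
Qed.

Section Flips.
Variables (n : nat) (s : seq nat).
Hypothesis s_code : pyr_code n s.

Definition flip_code (p : 'I_n * bool) : seq nat :=
  set_nth 0 s p.1 (cfg_flip (nth 0 s p.1) p.2).

Lemma nth_flip_code (p : 'I_n * bool) i :
  nth 0 (flip_code p) i = if i == p.1 then cfg_flip (nth 0 s p.1) p.2 else nth 0 s i.
Proof. by rewrite /flip_code nth_set_nth. Qed.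

Lemma flip_code_code p : pyr_code n (flip_code p).
Proof.
have [_ flip_lt4] := cfg_flipP p.2 (code_lt6 s_code p.1).
apply/and3P; split.
- by rewrite size_set_nth (size_code s_code); apply/eqP/maxn_idPr; apply: ltn_ord.
- by apply/(all_nthP 0) => i _; rewrite nth_flip_code; case: ifP; rewrite ?(code_lt6 s_code) //; lia.
- apply: nth_no_clash => i; rewrite !nth_flip_code.
  case: ifP => [_ | _]; first by lia.
  by case: ifP => [_ _ | _ /(code_no_clash s_code)]; first lia.
Qed.

Lemma flip_code_neq p : code_matching n (flip_code p) != code_matching n s.
Proof.
apply/eqP => /(code_matching_inj (flip_code_code p) s_code) /(congr1 (nth 0 ^~ p.1)).
rewrite nth_flip_code eqxx => flipE.
by have [/eqP] := cfg_flipP p.2 (code_lt6 s_code p.1).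
Qed.

Definition in_zone (p : 'I_n * bool) (a : nat * nat) : bool :=
  (4 * p.1 <= a.1 <= 4 * p.1 + 4) && flip_zone (nth 0 s p.1) p.2 (unshift p.1 a).

Lemma flip_code_zone_shift p j v : v \in frag_pts ->
  code_mate (flip_code p) (shift j v) != code_mate s (shift j v) -> in_zone p (shift j v).
Proof.
move=> pts_v; rewrite !code_mate_shift // nth_flip_code.
case: ifP => [/eqP-> | _]; last by rewrite eqxx.
rewrite (inj_eq (can_inj (shiftK _))) eq_sym => /(flip_zoneP (code_lt6 s_code _) pts_v) zone_v.
rewrite /in_zone shiftK zone_v andbT /shift /= leq_addr leq_add2l.
by move: pts_v; case: v {zone_v} => r y; rewrite mem_frag_pts /=; lia.
Qed.

Lemma flip_code_zone_cut p k y : (y == 2) || (y == 3) ->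
  code_mate (flip_code p) (4 * k, y) != code_mate s (4 * k, y) -> in_zone p (4 * k, y).
Proof.
move=> y23; rewrite !code_mate_cut /cut_mate !nth_flip_code.
have [_ flip_lt4] := cfg_flipP p.2 (code_lt6 s_code p.1).
have flip_n4 : cfg_flip (nth 0 s p.1) p.2 != 4 by lia.
have flip_n5 : cfg_flip (nth 0 s p.1) p.2 != 5 by lia.
have [kp | kp] := eqVneq k p.1.
  subst k; rewrite (negbTE flip_n4).
  have [s4 _ | _] := eqVneq (nth 0 s p.1) 4.
    by rewrite /in_zone /unshift /= s4 subnn /flip_zone /= leqnn leq_addr y23.
  case: (posnP p.1) => [_ | p_gt0]; first by rewrite /= eqxx.
  have /negbTE-> : p.1.-1 != p.1 by lia.
  by rewrite eqxx.
case: ifP => [_ | s4]; first by rewrite eqxx.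
have [k1p | k1p] := eqVneq k.-1 p.1; last by rewrite eqxx.
rewrite (negbTE flip_n5) andbF.
case: ifP => [/andP[k_gt0 /eqP s5] _ | _]; last by rewrite eqxx.
rewrite /in_zone /unshift /= -k1p s5 /flip_zone /= y23 andbT.
by lia.
Qed.

Lemma flip_code_zone p a : pyr_vert n a -> code_mate (flip_code p) a != code_mate s a -> in_zone p a.
Proof.
case/pyr_vertP => [[k [y [_ -> y23]]] | [j [v [_ pts_v ->]]]].
  exact: flip_code_zone_cut.
exact: flip_code_zone_shift.
Qed.

Lemma in_zone_disjoint p p' a : p \in flip_sites n s -> p' \in flip_sites n s ->
  in_zone p a -> in_zone p' a -> p = p'.
Proof.
have adjacent_zones (j j' : 'I_n) b b' : j < j' -> in_zone (j, b) a -> in_zone (j', b') a -> False.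
  rewrite /in_zone /unshift /= => jj' /andP[ja zone_j] /andP[j'a zone_j'].
  have j'E : nat_of_ord j' = j.+1 by lia.
  move: zone_j zone_j'.
  have -> : a.1 - 4 * j = 4 by lia.
  have -> : a.1 - 4 * j' = 0 by lia.
  move=> /(flip_zone_right (code_lt6 s_code _)) s5 /(flip_zone_left (code_lt6 s_code _)) s4.
  by move: (code_no_clash s_code s5); rewrite -j'E s4.
case: p p' => [j b] [j' b']; rewrite !inE /= => site site' zone zone'.
case: (ltngtP j j') => [jj' | j'j | /val_inj jj']; first by case: (adjacent_zones _ _ _ _ jj' zone zone').
  by case: (adjacent_zones _ _ _ _ j'j zone' zone).
subst j'; congr pair; move: zone zone'; rewrite /in_zone /= => /andP[_ zb] /andP[_ zb'].
case: b b' site site' zb zb' => [] [] //= site site' z z'.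
  by case: (flip_zone_excl site z' z).
by case: (flip_zone_excl site' z z').
Qed.

End Flips.

Lemma forcing_set_forcing_edges n s : pyr_code n s ->
  forcing_set (pyr_V n) (pyr_E n) (code_matching n s) (forcing_edges n s).
Proof.
move=> s_code; rewrite /forcing_set forcing_edges_sub //=; apply/forall_inP => M.
rewrite inE => /perfect_matching_code[s' s'_code ->]; apply/implyP => sub_s'.
by rewrite (forcing_edges_force s_code s'_code sub_s').
Qed.

Lemma code_weight_le_forcing_set n s S : pyr_code n s ->
  forcing_set (pyr_V n) (pyr_E n) (code_matching n s) S -> code_weight s <= #|S|.
Proof.
move=> s_code forcing_S; rewrite -(card_flip_sites s_code).
apply: (forcing_set_card_ge (N := fun p => code_matching n (flip_code s p))) forcing_S _ _.
  by move=> p _; rewrite code_matching_perfect ?flip_code_neq ?flip_code_code.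
move=> p p' _ site_p site_p' /imsetP[u Vu ->] not_p not_p'.
have Vcu : pyr_vert n (coords u) by rewrite -mem_pyr_V.
have zone (q : 'I_n * bool) :
    [set u; vertex_at n (code_mate s (coords u))] \notin code_matching n (flip_code s q) ->
    in_zone s q (coords u).
  move=> not_q; apply: (flip_code_zone s_code Vcu); apply: contra not_q => /eqP flipE.
  by rewrite -flipE -{1}(coordsK u); apply: coord_matching_mem.
exact: (in_zone_disjoint s_code site_p site_p' (zone p not_p) (zone p' not_p')).
Qed.

Lemma forcing_number_code n s : pyr_code n s ->
  forcing_number (pyr_V n) (pyr_E n) (code_matching n s) = code_weight s.
Proof.
move=> s_code; apply/eqP; rewrite eqn_leq.
rewrite (leq_trans (forcing_number_le (forcing_set_forcing_edges s_code)) (card_forcing_edges s_code)).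
apply: (forcing_number_ge (@pyr_E_pair n) (@pyr_E_V n) (code_matching_perfect s_code)) => S.
exact: code_weight_le_forcing_set.
Qed.

(** * Counting codes *)

Fixpoint codes (n : nat) : seq (seq nat) :=
  if n is m.+1 then [seq t <- [seq c :: t | c <- iota 0 6, t <- codes m] | no_clash t]
  else [:: [::]].

Lemma codesS n : codes n.+1 = [seq t <- [seq c :: t | c <- iota 0 6, t <- codes n] | no_clash t].
Proof. by []. Qed.

Lemma mem_codes n s : (s \in codes n) = pyr_code n s.
Proof.
elim: n s => [|n IHn] [|c s] //; rewrite codesS mem_filter.
  by apply/negbTE/negP => /andP[_ mem]; case: (allpairsP mem) => -[? ?] [].
apply/idP/idP => [/andP[no_clash_cs mem] | ].
  case: (allpairsP mem) => -[c' s'] [c'6 s'n] /= [? ?]; subst c' s'.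
  move: s'n c'6 no_clash_cs; rewrite IHn mem_iota /pyr_code /= add0n.
  by move=> /and3P[sn s6 ncs] c6 /andP[ok _]; rewrite eqSS sn c6 s6 ok ncs.
case/and3P=> sn /andP[c6 s6] no_clash_cs; rewrite no_clash_cs andTb.
apply: (allpairs_f (fun c s => c :: s)); first by rewrite mem_iota.
by rewrite IHn; apply/and3P; split=> //; case/andP: no_clash_cs.
Qed.

Lemma uniq_codes n : uniq (codes n).
Proof.
elim: n => [|n IHn] //; rewrite codesS; apply: filter_uniq.
apply: allpairs_uniq; [exact: iota_uniq | exact: IHn |].
by move=> [c1 s1] [c2 s2] _ _ [-> ->].
Qed.

Import GRing.Theory.
Local Open Scope ring_scope.

Definition code_poly (n : nat) : {poly int} := \sum_(s <- codes n) 'X^(code_weight s).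

Definition code_poly_left (n : nat) : {poly int} :=
  \sum_(s <- codes n | head 0%N s == 4%N) 'X^(code_weight s).

Lemma code_poly0 : code_poly 0 = 1.
Proof. by rewrite /code_poly big_seq1 expr0. Qed.

Lemma code_poly_left0 : code_poly_left 0 = 0.
Proof. by rewrite /code_poly_left big_cons big_nil. Qed.

Lemma forcing_poly_code n : forcing_poly (pyr_V n) (pyr_E n) = code_poly n.
Proof.
rewrite /forcing_poly /code_poly -big_enum /=.
have -> : \sum_(s <- codes n) 'X^(code_weight s) =
          \sum_(M <- map (code_matching n) (codes n)) 'X^(forcing_number (pyr_V n) (pyr_E n) M)
          :> {poly int}.
  by rewrite big_map; apply: eq_big_seq => s; rewrite mem_codes => /forcing_number_code->.
apply: perm_big; apply: uniq_perm; first exact: enum_uniq.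
  by rewrite map_inj_in_uniq ?uniq_codes // => s1 s2; rewrite !mem_codes; apply: code_matching_inj.
move=> M; rewrite mem_enum inE; apply/idP/mapP => [/perfect_matching_code[s s_code ->] | [s]].
  by exists s; rewrite ?mem_codes.
by rewrite mem_codes => s_code ->; apply: code_matching_perfect.
Qed.

Lemma F_pyrene_code_poly n : F_pyrene n = code_poly n.
Proof. by case: n => [|n]; rewrite /F_pyrene ?code_poly0 ?forcing_poly_code. Qed.

Lemma sum_codesS n (P : pred nat) :
  \sum_(t <- codes n.+1 | P (head 0%N t)) 'X^(code_weight t) =
  \sum_(c <- iota 0 6 | P c)
     'X^(cfg_weight c) * (if c == 5%N then code_poly n - code_poly_left n else code_poly n).
Proof.
rewrite codesS big_filter_cond big_mkcond big_allpairs_dep [RHS]big_mkcond.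
apply: eq_big_seq => c _; case: (boolP (P c)) => Pc; last first.
  by rewrite big1_seq // => s _; rewrite andbF.
transitivity (\sum_(s <- codes n | ~~ ((c == 5%N) && (head 0%N s == 4%N)))
                ('X^(cfg_weight c) * 'X^(code_weight s) : {poly int})).
  rewrite [RHS]big_mkcond; apply: eq_big_seq => s; rewrite mem_codes => /and3P[_ _ ncs].
  by rewrite /= ncs !andbT code_weight_cons exprD.
rewrite -big_distrr; congr (_ * _).
have [_ | //] := eqVneq c 5%N.
by rewrite /code_poly [in RHS](bigID (fun s => head 0%N s == 4%N)) /= addrAC subrr add0r.
Qed.

Lemma code_polyS n :
  code_poly n.+1 = (4%:R *: 'X^2 + 2%:R *: 'X) * code_poly n - 'X * code_poly_left n.
Proof.
rewrite {1}/code_poly (sum_codesS n xpredT) /= !big_cons big_nil /=.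
by rewrite -!mul_polyC !polyC_natr; ring.
Qed.

Lemma code_poly_leftS n : code_poly_left n.+1 = 'X * code_poly n.
Proof. by rewrite {1}/code_poly_left (sum_codesS n (pred1 4%N)) /= !big_cons big_nil /= expr1 addr0. Qed.

Theorem theorem3p1 :
  F_pyrene 1 = 4%:R *: 'X^2 + 2%:R *: 'X /\
  (forall n : nat, (2 <= n)%N ->
     F_pyrene n = (4%:R *: 'X^2 + 2%:R *: 'X) * F_pyrene n.-1
                  - 'X^2 * F_pyrene n.-2).
Proof.
have F1 : F_pyrene 1 = 4%:R *: 'X^2 + 2%:R *: 'X.
  by rewrite F_pyrene_code_poly code_polyS code_poly0 code_poly_left0 mulr1 mulr0 subr0.
split=> // -[|[|n]] // _.
by rewrite !F_pyrene_code_poly /= code_polyS code_poly_leftS mulrA -expr2.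
Qed.
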